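(* Let $G$ be a finite group and $N$ a normal subgroup of $G$ with $1\neq N\neq G$. If $\mathcal{D}(G)-\mathcal{D}_G(N)=m$, then $\mathcal{D}(G/N)\le m-1$. In particular, $\mathcal{D}(G/N)\le \mathcal{D}(G)-1$.
   Context: All groups are finite. $\mathcal{D}(G)$ denotes the number of conjugacy classes of nontrivial subgroups $H$ of $G$ with $N_G(H)\neq H$. For $N\trianglelefteq G$, $\mathcal{D}_G(N)$ denotes the number of $G$-conjugacy classes of nontrivial subgroups $H$ of $G$ with $N_G(H)\neq H$ that are properly contained in $N$. *)

From mathcomp Require Import all_boot all_fingroup.
Set Implicit Arguments. Unset Strict Implicit. Unset Printing Implicit Defensive.
Local Open Scope group_scope.

Definition nsn_subgroups (gT : finGroupType) (G : {group gT}) (P : pred {set gT})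
  : {set {set gT}} :=
  [set H : {set gT} | [&& group_set H, H \subset G, H != 1, 'N_G(H) != H & P H]].

Definition nclasses (gT : finGroupType) (G : {group gT}) (S : {set {set gT}}) : nat :=
  #|[set H :^: G | H in S]|.

Definition calD (gT : finGroupType) (G : {group gT}) : nat :=
  nclasses G (nsn_subgroups G predT).

Definition calDG (gT : finGroupType) (G N : {group gT}) : nat :=
  nclasses G (nsn_subgroups G (fun H => H \proper N)).

From mathcomp Require Import all_boot all_fingroup.
Set Implicit Arguments. Unset Strict Implicit. Unset Printing Implicit Defensive.
Local Open Scope group_scope.

(* The classes counted by D(G) but not by D_G(N) are those of subgroups not
   properly contained in N.  Among them is the class {N}, and taking preimages
   under G -> G/N sends the classes counted by D(G/N) injectively to further
   such classes: a preimage K of a nontrivial subgroup of G/N properly contains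
   N, and N_G(K)/N = N_(G/N)(K/N), so K is not self-normalizing when K/N is not. *)

Section Conjugates.
Variable gT : finGroupType.
Implicit Types (G : {group gT}) (A B : {set gT}).

Lemma conjugates_refl G A : A \in A :^: G.
Proof. by apply/imsetP; exists 1; rewrite ?group1 ?conjsg1. Qed.

Lemma mem_conjugatesP G A B :
  B \in A :^: G -> exists2 x, x \in G & B = A :^ x.
Proof. by case/imsetP=> x; exists x. Qed.

Lemma norm_conjugates_set1 G A : G \subset 'N(A) -> A :^: G = [set A].
Proof.
move=> nAG; apply/setP=> B; rewrite inE; apply/idP/eqP=> [|->].
  by case/mem_conjugatesP=> x /(subsetP nAG) /normP nAx ->.
exact: conjugates_refl.
Qed.

End Conjugates.

Section ClassSplitting.
Variables (gT : finGroupType) (G : {group gT}) (P : pred {set gT}).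
Hypothesis conj_invP : {in G, forall x H, P (H :^ x) = P H}.

Lemma calD_split :
  calD G = (nclasses G (nsn_subgroups G P)
            + nclasses G (nsn_subgroups G (predC P)))%N.
Proof.
rewrite /calD /nclasses.
have -> : nsn_subgroups G predT =
          nsn_subgroups G P :|: nsn_subgroups G (predC P).
  by apply/setP=> H; rewrite !inE; case: (P H); rewrite ?andbT ?andbF ?orbF.
rewrite imsetU -cardsUI; apply/eqP.
rewrite -[X in X == _]addn0 eqn_add2l eq_sym cards_eq0; apply/eqP/setP=> C.
rewrite !inE; apply/negbTE; apply/andP=> -[/imsetP[H SH ->] /imsetP[K SK eqHK]].
have /mem_conjugatesP[x Gx defK] : K \in H :^: G by rewrite eqHK conjugates_refl.
move: SH SK; rewrite !inE defK conj_invP // => /and5P[_ _ _ _ ->].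
by rewrite /= !andbF.
Qed.

End ClassSplitting.

Section QuotientPreimages.
Variables (gT : finGroupType) (G N : {group gT}).
Hypothesis nsNG : N <| G.

Let nNG : G \subset 'N(N) := normal_norm nsNG.

Lemma morphpre_coset_conjugates (Kb : {set coset_of N}) :
  [set coset N @*^-1 X | X in Kb :^: (G / N)] = coset N @*^-1 Kb :^: G.
Proof.
rewrite /conjugates /quotient morphimEsub // -!imset_comp.
by apply: eq_in_imset => x Gx /=; rewrite morphpreJ ?(subsetP nNG).
Qed.

Lemma morphpre_coset_nsn (Kb : {set coset_of N}) :
    Kb \in nsn_subgroups (G / N) predT ->
  coset N @*^-1 Kb \in nsn_subgroups G (predC (fun H : {set gT} => H \proper N))
  /\ coset N @*^-1 Kb != N.
Proof.
rewrite inE andbT => /and4P[gKb]; rewrite -[Kb]/(gval (Group gKb)).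
move: (Group gKb) => {gKb}Kb sKbG ntKb nKb; set K := coset N @*^-1 Kb.
have sNK : N \subset K := sub_cosetpre _.
have neKN : K != N.
  by apply: contraNneq ntKb => eqKN; rewrite -(cosetpreK Kb) -/K eqKN trivg_quotient.
have sKG : K \subset G by rewrite -(quotientGK nsNG) cosetpreSK.
have nprKN : ~~ (K \proper N) by rewrite properE sNK andbF.
split=> //; rewrite inE groupP sKG /= nprKN andbT; apply/andP; split.
  by apply: contraNneq neKN => K1; rewrite eqEsubset sNK K1 sub1G.
apply: contra nKb => /eqP nKK.
by rewrite -{2}(cosetpreK Kb) -/K -nKK quotient_subnormG ?normal_cosetpre // cosetpreK.
Qed.

Lemma calD_quotient_lt :
    N :!=: 1 -> N :!=: G ->
  calD (G / N) < nclasses G (nsn_subgroups G (predC (fun H : {set gT} => H \proper N))).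
Proof.
move=> ntN neNG; rewrite /calD /nclasses.
set T := nsn_subgroups G _; set C := [set H :^: G | H in T].
pose pre (X : {set {set coset_of N}}) := [set coset N @*^-1 Kb | Kb in X].
have preK : cancel pre (fun Y => [set coset N @* K | K in Y]).
  move=> X; rewrite -imset_comp -[RHS]imset_id; apply: eq_imset => Kb /=.
  by rewrite morphpreK ?sub_im_coset.
have NC : (N : {set gT}) :^: G \in C.
  apply: imset_f; rewrite inE groupP normal_sub //= ntN proper_irrefl andbT.
  by rewrite (setIidPl nNG) eq_sym.
have preC : pre @: [set Kb :^: (G / N) | Kb in nsn_subgroups (G / N) predT]
            \subset C :\ (N :^: G).
  apply/subsetP=> _ /imsetP[_ /imsetP[Kb nsnKb ->] ->].
  have [TK neKN] := morphpre_coset_nsn nsnKb.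
  rewrite /pre morphpre_coset_conjugates !inE (imset_f _ TK) andbT.
  apply: contra neKN => /eqP eqKN.
  by rewrite -in_set1 -(norm_conjugates_set1 nNG) -eqKN conjugates_refl.
rewrite -(card_imset _ (can_inj preK)); apply: proper_card.
exact: sub_proper_trans preC (properD1 NC).
Qed.

End QuotientPreimages.

Theorem mainTheorem2 (gT : finGroupType) (G N : {group gT}) (m : nat) :
  N <| G -> N :!=: 1 -> N :!=: G ->
  calD G = (calDG G N + m)%N ->
  (calD (G / N)%G + 1 <= m)%N /\ (calD (G / N)%G + 1 <= calD G)%N.
Proof.
move=> nsNG ntN neNG.
have properN_conj : {in G, forall x (H : {set gT}), (H :^ x \proper N) = (H \proper N)}.
  move=> x Gx H; have /normP {1}<- := subsetP (normal_norm nsNG) x Gx.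
  by rewrite properJ.
have := calD_quotient_lt nsNG ntN neNG.
rewrite (calD_split properN_conj) addn1 => ltDq /eqP.
rewrite eqn_add2l => /eqP <-; split=> //.
exact: leq_trans ltDq (leq_addl _ _).
Qed.
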